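(* Let $n\ge 1$ and $m\ge 2$ be integers with $m\nmid n$, and let $\ell=\lfloor n/m\rfloor$. Then $k=\ell+1$ is the smallest nonnegative integer $k$ for which $\theta_{m,k}=\mathbf{0}$ (the map sending every $x\in\mathbb{F}_2^n$ to the zero vector).
   Context: For $x=(x_0,\dots,x_{n-1})\in\mathbb{F}_2^n$, indices of coordinates are taken modulo $n$. For a nonnegative integer $k$, the map $\theta_{m,k}\colon\mathbb{F}_2^n\to\mathbb{F}_2^n$ is defined by $\theta_{m,k}(x)=y$ with $y_i=x_{i+mk}\prod_{1\le j\le mk-1,\ m\nmid j}(x_{i+j}+1)$ for $i\in\{0,\dots,n-1\}$ (for $k=0$ the empty product is $1$, so $\theta_{m,0}$ is the identity map). *)

From HB Require Import structures.
From mathcomp Require Import all_boot all_order all_algebra.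
Set Implicit Arguments. Unset Strict Implicit. Unset Printing Implicit Defensive.
Import GRing.Theory.
Local Open Scope ring_scope.

Lemma ord_pos (n : nat) (i : 'I_n) : (0 < n)%N.
Proof. by case: i => i /= /(leq_ltn_trans (leq0n i)). Qed.

Definition shift (n : nat) (i : 'I_n) (j : nat) : 'I_n :=
  Ordinal (ltn_pmod (i + j) (ord_pos i)).

Definition theta (n m k : nat) (x : {ffun 'I_n -> 'F_2}) : {ffun 'I_n -> 'F_2} :=
  [ffun i => x (shift i (m * k)) *
     \prod_(1 <= j < m * k | ~~ (m %| j)%N) (x (shift i j) + 1)].

Definition theta_is_zero (n m k : nat) : Prop :=
  forall x : {ffun 'I_n -> 'F_2}, theta m k x = 0.

(* If m does not divide n, then j := m - n mod m satisfies 0 < j < m (l+1) and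
   j = m (l+1) - n, so in theta_{m,l+1} the coordinate x_{i+j} wraps around onto
   x_{i+m(l+1)}: every coordinate of theta_{m,l+1}(x) contains a factor
   x_{i+j} (x_{i+j} + 1), which vanishes over F_2.  For k <= l there is no
   wrap-around since mk < n, and the indicator of the multiples of m is sent
   to a vector whose coordinate 0 is 1. *)
From mathcomp Require Import all_boot all_order all_algebra.
From mathcomp Require Import zify.
Import GRing.Theory.

Lemma F2_mulr_addr1 (a : 'F_2) : (a * (a + 1) = 0)%R.
Proof. by case: a => [[|[|a]]] //= a_lt2; apply/val_inj. Qed.

Lemma theta_eq0_of_wrap (n m k j : nat) :
  (0 < j < m * k)%N -> ~~ (m %| j)%N -> j = m * k %[mod n] ->
  theta_is_zero n m k.
Proof.
move=> j_range m_ndvd_j j_eq x; apply/ffunP => i; rewrite !ffunE.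
have -> : shift i (m * k) = shift i j.
  by apply/val_inj; rewrite /= -modnDmr -j_eq modnDmr.
have j_in : j \in [seq j <- index_iota 1 (m * k) | ~~ (m %| j)%N].
  by rewrite mem_filter mem_index_iota m_ndvd_j.
rewrite -big_filter (bigD1_seq j) //=; last exact/filter_uniq/iota_uniq.
by rewrite mulrA F2_mulr_addr1 mul0r.
Qed.

Lemma theta_neq0 (n m k : nat) : (m * k < n)%N -> ~ theta_is_zero n m k.
Proof.
move=> mk_lt_n theta0; have n_gt0 : (0 < n)%N by lia.
pose x : {ffun 'I_n -> 'F_2} := [ffun p : 'I_n => ((m %| p)%N)%:R%R].
have /ffunP/(_ (Ordinal n_gt0)) := theta0 x; rewrite !ffunE.
have -> : shift (Ordinal n_gt0) (m * k) = m * k :> nat by rewrite /= modn_small.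
rewrite dvdn_mulr // big_nat_cond big1 ?mulr1 => [|j /andP[/andP[j_gt0 j_lt] m_ndvd_j]].
  by move/eqP; rewrite oner_eq0.
by rewrite ffunE /= modn_small ?(negbTE m_ndvd_j) ?add0r //; lia.
Qed.

Lemma mulnS_divn (n m : nat) : (0 < m)%N -> m * (n %/ m).+1 = m - n %% m + n.
Proof.
move=> m_gt0; have := ltn_pmod n m_gt0; have := divn_eq n m; rewrite mulnS; lia.
Qed.

Theorem corollary1 (n m : nat) :
  (1 <= n)%N -> (2 <= m)%N -> ~~ (m %| n)%N ->
  theta_is_zero n m (n %/ m).+1 /\
  (forall k : nat, theta_is_zero n m k -> ((n %/ m).+1 <= k)%N).
Proof.
move=> n_gt0 m_gt1 m_ndvd_n; have m_gt0 : (0 < m)%N by lia.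
have r_gt0 : (0 < n %% m)%N by rewrite lt0n.
have r_lt := ltn_pmod n m_gt0.
split.
- apply: (@theta_eq0_of_wrap _ _ _ (m - n %% m)); rewrite ?mulnS_divn //.
  + by apply/andP; split; lia.
  + by apply/negP => /dvdn_leq; lia.
  + by rewrite modnDr.
- move=> k theta0; rewrite ltnNge; apply/negP => k_le.
  apply: (@theta_neq0 n m k _ theta0).
  have : (m * k <= m * (n %/ m))%N by rewrite leq_mul2l k_le orbT.
  by have := divn_eq n m; lia.
Qed.
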